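(* Let $S$ be an abundant semigroup with a quasi-ideal adequate transversal $S^0$, let $R=\{x\in S:e_x=e_{\bar x}\}$, $L=\{x\in S:f_x=f_{\bar x}\}$ and $T=\{(x,a)\in L\times R:\bar x=\bar a\}$. If $(x,a)\in T$ then $xf_a=e_xa$.
   Context: For a semigroup $S$, $\mathcal{R}^\ast=\{(a,b): \text{for all } x,y\in S^1,\ xa=ya \iff xb=yb\}$ and $\mathcal{L}^\ast$ dually. $S$ is abundant if every $\mathcal{R}^\ast$-class and $\mathcal{L}^\ast$-class contains an idempotent; adequate if abundant with commuting idempotents. In an adequate semigroup $a^+,a^\ast$ are the unique idempotents $\mathcal{R}^\ast$-, resp. $\mathcal{L}^\ast$-related to $a$. A subsemigroup $U$ of abundant $S$ is a $\ast$-subsemigroup if $U$ is abundant and $\mathcal{L}^\ast_U=\mathcal{L}^\ast_S\cap(U\times U)$, $\mathcal{R}^\ast_U=\mathcal{R}^\ast_S\cap(U\times U)$. An adequate $\ast$-subsemigroup $S^0$ of abundant $S$ is an adequate transversal if for each $x\in S$ there is a unique $\bar x\in S^0$ and idempotents $e,f$ of $S$ with $x=e\bar xf$, $e\,\mathcal{L}\,\bar x^+$, $f\,\mathcal{R}\,\bar x^\ast$; these $e,f$ are unique and denoted $e_x,f_x$. It is a quasi-ideal adequate transversal if moreover $S^0SS^0\subseteq S^0$. *)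

Set Implicit Arguments.

Section Semigroup.
Variables (T : Type) (mul : T -> T -> T).

Definition associative_op : Prop :=
  forall a b c, mul a (mul b c) = mul (mul a b) c.

Definition idem (e : T) : Prop := mul e e = e.

(* elements of S^1 are represented by option T, None being the adjoined identity *)
Definition lmul1 (x : option T) (a : T) : T :=
  match x with None => a | Some x => mul x a end.
Definition rmul1 (a : T) (x : option T) : T :=
  match x with None => a | Some x => mul a x end.

Definition in1 (U : T -> Prop) (x : option T) : Prop :=
  match x with None => True | Some x => U x end.

Definition Rstar_in (U : T -> Prop) (a b : T) : Prop :=
  forall x y : option T, in1 U x -> in1 U y ->
    (lmul1 x a = lmul1 y a <-> lmul1 x b = lmul1 y b).
Definition Lstar_in (U : T -> Prop) (a b : T) : Prop :=
  forall x y : option T, in1 U x -> in1 U y ->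
    (rmul1 a x = rmul1 a y <-> rmul1 b x = rmul1 b y).

Definition allS : T -> Prop := fun _ => True.
Definition Rstar := Rstar_in allS.
Definition Lstar := Lstar_in allS.

Definition GreenL (a b : T) : Prop :=
  exists u v : option T, a = lmul1 u b /\ b = lmul1 v a.
Definition GreenR (a b : T) : Prop :=
  exists u v : option T, a = rmul1 b u /\ b = rmul1 a v.

Definition subsemigroup (U : T -> Prop) : Prop :=
  forall a b, U a -> U b -> U (mul a b).

Definition abundant_in (U : T -> Prop) : Prop :=
  forall a, U a ->
    (exists e, U e /\ idem e /\ Rstar_in U a e) /\
    (exists e, U e /\ idem e /\ Lstar_in U a e).

Definition abundant : Prop := abundant_in allS.

Definition adequate_in (U : T -> Prop) : Prop :=
  abundant_in U /\
  forall e f, U e -> U f -> idem e -> idem f -> mul e f = mul f e.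

Definition star_subsemigroup (U : T -> Prop) : Prop :=
  subsemigroup U /\ abundant_in U /\
  forall a b, U a -> U b ->
    (Lstar_in U a b <-> Lstar a b) /\ (Rstar_in U a b <-> Rstar a b).

Definition plus_in (U : T -> Prop) (a p : T) : Prop :=
  U p /\ idem p /\ Rstar_in U a p.
Definition ast_in (U : T -> Prop) (a q : T) : Prop :=
  U q /\ idem q /\ Lstar_in U a q.

Definition decomp (S0 : T -> Prop) (x xb e f : T) : Prop :=
  S0 xb /\ idem e /\ idem f /\ x = mul (mul e xb) f /\
  (exists p, plus_in S0 xb p /\ GreenL e p) /\
  (exists q, ast_in S0 xb q /\ GreenR f q).

Definition adequate_transversal (S0 : T -> Prop) : Prop :=
  adequate_in S0 /\ star_subsemigroup S0 /\
  forall x, exists! xb, exists e f, decomp S0 x xb e f.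

Definition quasi_ideal_adequate_transversal (S0 : T -> Prop) : Prop :=
  adequate_transversal S0 /\
  forall u s v, S0 u -> S0 v -> S0 (mul (mul u s) v).

End Semigroup.

Set Implicit Arguments.

(** Write [u] for [bar x = bar a].  Since [u] lies in [S0] it is its own
    representative, so [u = e_u u f_u] and hence [e_u u = u].  The
    idempotents [f_u] and [f_a] are both [R]-related to [u^*], so
    [f_u f_a = f_a].  With [f_x = f_u] and [e_a = e_u] this gives
    [x f_a = e_x u f_u f_a = e_x u f_a = e_x e_u u f_a = e_x a]. *)

Section AdequateTransversal.
Variables (T : Type) (mul : T -> T -> T).
Hypothesis mulA : associative_op mul.

Lemma rmul1A a b w : mul a (rmul1 mul b w) = rmul1 mul (mul a b) w.
Proof. destruct w; simpl; [apply mulA | reflexivity]. Qed.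

Lemma GreenR_idem_mul f g q :
  idem mul f -> GreenR mul f q -> GreenR mul g q -> mul f g = g.
Proof.
  intros If [_ [v [_ Eq]]] [w [_ [Eg _]]].
  assert (fq : mul f q = q) by (rewrite Eq, rmul1A, If; reflexivity).
  rewrite Eg, rmul1A, fq; reflexivity.
Qed.

Lemma Lstar_in_mulr_fix U a b c :
  Lstar_in mul U a b -> U c -> mul a c = a -> mul b c = b.
Proof. intros Lab Uc Eac; exact (proj1 (Lab (Some c) None Uc I) Eac). Qed.

Lemma Rstar_in_mull_fix U a b c :
  Rstar_in mul U a b -> U c -> mul c a = a -> mul c b = b.
Proof. intros Rab Uc Eca; exact (proj1 (Rab (Some c) None Uc I) Eca). Qed.

Lemma Lstar_in_sym U a b : Lstar_in mul U a b -> Lstar_in mul U b a.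
Proof. intros Lab x y Ux Uy; exact (iff_sym (Lab x y Ux Uy)). Qed.

Lemma Rstar_in_sym U a b : Rstar_in mul U a b -> Rstar_in mul U b a.
Proof. intros Rab x y Ux Uy; exact (iff_sym (Rab x y Ux Uy)). Qed.

Lemma ast_in_mulr U a q : ast_in mul U a q -> mul a q = a.
Proof.
  intros [Uq [Iq Laq]]; exact (Lstar_in_mulr_fix (Lstar_in_sym Laq) Uq Iq).
Qed.

Lemma plus_in_mull U a p : plus_in mul U a p -> mul p a = a.
Proof.
  intros [Up [Ip Rap]]; exact (Rstar_in_mull_fix (Rstar_in_sym Rap) Up Ip).
Qed.

Lemma ast_in_unique U a q1 q2 :
  (forall e f, U e -> U f -> idem mul e -> idem mul f -> mul e f = mul f e) ->
  ast_in mul U a q1 -> ast_in mul U a q2 -> q1 = q2.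
Proof.
  intros idemC A1 A2.
  destruct A1 as [U1 [I1 L1]], A2 as [U2 [I2 L2]].
  assert (q21 : mul q2 q1 = q2)
    by exact (Lstar_in_mulr_fix L2 U1 (ast_in_mulr (conj U1 (conj I1 L1)))).
  assert (q12 : mul q1 q2 = q1)
    by exact (Lstar_in_mulr_fix L1 U2 (ast_in_mulr (conj U2 (conj I2 L2)))).
  rewrite <- q12, idemC; auto.
Qed.

Lemma decomp_self S0 u : abundant_in mul S0 -> S0 u -> exists e f, decomp mul S0 u u e f.
Proof.
  intros HS0 Su.
  destruct (HS0 u Su) as [[p [Sp [Ip Rp]]] [q [Sq [Iq Lq]]]].
  assert (Pp : plus_in mul S0 u p) by exact (conj Sp (conj Ip Rp)).
  assert (Aq : ast_in mul S0 u q) by exact (conj Sq (conj Iq Lq)).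
  exists p, q; repeat split; auto.
  - rewrite (plus_in_mull Pp), (ast_in_mulr Aq); reflexivity.
  - exists p; split; [exact Pp | exists None, None; auto].
  - exists q; split; [exact Aq | exists None, None; auto].
Qed.

Lemma transversal_fixes_S0 S0 (bar eF fF : T -> T) u :
  adequate_transversal mul S0 ->
  (forall x, decomp mul S0 x (bar x) (eF x) (fF x)) ->
  S0 u -> bar u = u.
Proof.
  intros [[HS0 _] [_ uniq]] Hdec Su.
  destruct (uniq u) as [w [_ Hw]].
  destruct (decomp_self u HS0 Su) as [e [f Du]].
  rewrite <- (Hw (bar u)); [apply Hw; exists e, f; exact Du |].
  exists (eF u), (fF u); apply Hdec.
Qed.

Lemma idem_mull_fix e u f : idem mul e -> u = mul (mul e u) f -> mul e u = u.
Proof.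
  intros Ie Eu.
  assert (E : mul e (mul (mul e u) f) = mul (mul e u) f)
    by (rewrite !mulA, Ie; reflexivity).
  rewrite <- Eu in E; exact E.
Qed.

End AdequateTransversal.

Theorem lemma2p4 (T : Type) (mul : T -> T -> T)
  (Hassoc : associative_op mul)
  (Habund : abundant mul)
  (S0 : T -> Prop)
  (HS0 : quasi_ideal_adequate_transversal mul S0)
  (bar eF fF : T -> T)
  (Hdec : forall x, decomp mul S0 x (bar x) (eF x) (fF x))
  (x a : T)
  (HxL : fF x = fF (bar x))
  (HaR : eF a = eF (bar a))
  (Hxa : bar x = bar a) :
  mul x (fF a) = mul (eF x) a.
Proof.
  destruct HS0 as [Htr _].
  destruct (Hdec x) as [Su [_ [_ [Dx _]]]].
  rewrite HxL in Dx; rewrite Hxa in Su, Dx.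
  set (u := bar a) in *.
  assert (bar_u : bar u = u) by exact (transversal_fixes_S0 _ _ _ _ Htr Hdec Su).
  destruct (Hdec u) as [_ [Ieu [Ifu [Du [_ [q1 [A1 G1]]]]]]].
  destruct (Hdec a) as [_ [_ [_ [Da [_ [q2 [A2 G2]]]]]]].
  fold u in Da, A2; rewrite bar_u in Du, A1.
  destruct Htr as [[_ idemC] _].
  rewrite <- (ast_in_unique idemC A1 A2) in G2.
  assert (fuf : mul (fF u) (fF a) = fF a) by exact (GreenR_idem_mul Hassoc Ifu G1 G2).
  assert (euu : mul (eF u) u = u) by exact (idem_mull_fix Hassoc _ Ieu Du).
  set (ex := eF x) in *; clearbody ex; subst x.
  rewrite <- (Hassoc (mul ex u)), fuf.
  transitivity (mul ex (mul (mul (eF a) u) (fF a))).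
  - rewrite HaR, euu, Hassoc; reflexivity.
  - rewrite <- Da; reflexivity.
Qed.
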